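(* Let $T$ be a hyperplane (linear subspace of dimension $n-1$) in $\mathbf{R}^n$, $\alpha\in T$, $f:T\to T^\perp$ a function continuous at $\alpha$, $a=\alpha+f(\alpha)$, $A=\{\chi+f(\chi):\chi\in T\}$, and suppose $\mathrm{Tan}(A,a)\subseteq T$. Then $f$ is differentiable at $\alpha$ with $\mathrm{D}f(\alpha)=0$, and $\mathrm{Tan}(A,a)=T$.
   Context: For $A\subseteq\mathbf{R}^n$ and $a\in\mathbf{R}^n$, the tangent cone $\mathrm{Tan}(A,a)$ is the set of all $v\in\mathbf{R}^n$ such that for every $\varepsilon>0$ there exist $x\in A$ and $r>0$ with $|x-a|<\varepsilon$ and $|r(x-a)-v|<\varepsilon$ (Federer's definition). *)

From HB Require Import structures.
From mathcomp Require Import all_boot all_order all_algebra.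
From mathcomp Require Import reals.
Set Implicit Arguments. Unset Strict Implicit. Unset Printing Implicit Defensive.
Import Order.TTheory GRing.Theory Num.Theory.
Local Open Scope ring_scope.

Section Defs.
Variables (R : realType) (n : nat).

Definition dotv (u v : 'rV[R]_n) : R := \sum_(i < n) u 0 i * v 0 i.

Definition enorm (v : 'rV[R]_n) : R := Num.sqrt (dotv v v).

Definition perp (T : {vspace 'rV[R]_n}) (v : 'rV[R]_n) : Prop :=
  forall t, t \in T -> dotv t v = 0.

Definition Tan (A : 'rV[R]_n -> Prop) (a : 'rV[R]_n) (v : 'rV[R]_n) : Prop :=
  forall eps : R, 0 < eps ->
    exists x, exists r : R, A x /\ 0 < r /\
      enorm (x - a) < eps /\ enorm (r *: (x - a) - v) < eps.

Definition cont_at_in (T : {vspace 'rV[R]_n}) (f : 'rV[R]_n -> 'rV[R]_n)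
  (alpha : 'rV[R]_n) : Prop :=
  forall eps : R, 0 < eps -> exists delta : R, 0 < delta /\
    forall x, x \in T -> enorm (x - alpha) < delta ->
      enorm (f x - f alpha) < eps.

(* f (defined on the subspace T) is differentiable at alpha with derivative
   the map L (on T): f x = f alpha + L (x - alpha) + o(|x - alpha|)
   for x in T.  (L is applied only with L = 0 below, which is linear.) *)
Definition diff_at_in (T : {vspace 'rV[R]_n}) (f : 'rV[R]_n -> 'rV[R]_n)
  (alpha : 'rV[R]_n) (L : 'rV[R]_n -> 'rV[R]_n) : Prop :=
  forall eps : R, 0 < eps -> exists delta : R, 0 < delta /\
    forall x, x \in T -> enorm (x - alpha) < delta ->
      enorm (f x - f alpha - L (x - alpha)) <= eps * enorm (x - alpha).

End Defs.

(* The chord x + f x - a = (x - alpha) + (f x - f alpha) of A splits into orthogonal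
   parts in T and in T^perp.  If Df(alpha) = 0 failed, there would be x -> alpha with
   |f x - f alpha| > c |x - alpha|, so the T^perp-part of the normalised chord would
   have length at least c / (c + 1); by continuity of f these chords shrink to a, and a
   cluster point w of their directions lies in Tan(A, a), hence in T, which is absurd
   since w has no T^perp-part.  Conversely, once Df(alpha) = 0, each v in T is the
   limit of the rescaled chords to alpha + t v + f (alpha + t v) as t -> 0+. *)
From HB Require Import structures.
From mathcomp Require Import all_boot all_order all_algebra.
From mathcomp Require Import reals.
From mathcomp Require Import boolp classical_sets topology normedtype.
From mathcomp Require Import ring lra.
Import Order.TTheory GRing.Theory Num.Theory.
Import numFieldTopology.Exports numFieldNormedType.Exports.
Local Open Scope ring_scope.

Section Euclidean.
Context {R : realType} {m : nat}.
Implicit Types (u v w : 'rV[R]_m) (a eta : R).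

Lemma dotvC u v : dotv u v = dotv v u.
Proof. by apply: eq_bigr => i _; rewrite mulrC. Qed.

Lemma dotvDl u v w : dotv (u + v) w = dotv u w + dotv v w.
Proof. by rewrite /dotv -big_split; apply: eq_bigr => i _; rewrite mxE mulrDl. Qed.

Lemma dotvZl a u v : dotv (a *: u) v = a * dotv u v.
Proof. by rewrite /dotv mulr_sumr; apply: eq_bigr => i _; rewrite mxE mulrA. Qed.

Lemma dotvBl u v w : dotv (u - v) w = dotv u w - dotv v w.
Proof. by rewrite dotvDl -scaleN1r dotvZl mulN1r. Qed.

Lemma dotvDr u v w : dotv w (u + v) = dotv w u + dotv w v.
Proof. by rewrite dotvC dotvDl !(dotvC w). Qed.

Lemma dotvZr a u v : dotv v (a *: u) = a * dotv v u.
Proof. by rewrite dotvC dotvZl dotvC. Qed.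

Lemma dotvBr u v w : dotv w (u - v) = dotv w u - dotv w v.
Proof. by rewrite dotvC dotvBl !(dotvC w). Qed.

Lemma coordB u v i : (u - v) 0 i = u 0 i - v 0 i.
Proof. by rewrite !mxE. Qed.

Lemma dotvv_ge0 v : 0 <= dotv v v.
Proof. by apply: sumr_ge0 => i _; rewrite -expr2 sqr_ge0. Qed.

Lemma enorm_ge0 v : 0 <= enorm v.
Proof. exact: sqrtr_ge0. Qed.

Lemma enorm_sqr v : enorm v ^+ 2 = dotv v v.
Proof. by rewrite sqr_sqrtr // dotvv_ge0. Qed.

Lemma enormZ a v : enorm (a *: v) = `|a| * enorm v.
Proof.
rewrite /enorm dotvZl dotvZr mulrA sqrtrM; last by rewrite -expr2 sqr_ge0.
by rewrite -expr2 sqrtr_sqr.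
Qed.

Lemma enorm0 : enorm (0 : 'rV[R]_m) = 0.
Proof. by rewrite -(scale0r (0 : 'rV[R]_m)) enormZ normr0 mul0r. Qed.

Lemma enorm_le v eta : 0 <= eta -> dotv v v <= eta ^+ 2 -> enorm v <= eta.
Proof.
by move=> eta0 h; rewrite /enorm -(ger0_norm eta0) -sqrtr_sqr ler_sqrt // exprn_ge0.
Qed.

Lemma coord_le_enorm v i : `|v 0 i| <= enorm v.
Proof.
rewrite -sqrtr_sqr /enorm ler_sqrt ?dotvv_ge0 // /dotv (bigD1 i) //= expr2 lerDl.
by apply: sumr_ge0 => j _; rewrite -expr2 sqr_ge0.
Qed.

Lemma enorm_gt0 v : v != 0 -> 0 < enorm v.
Proof.
move=> v0; have [i vi] : exists i, v 0 i != 0.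
  apply: contrapT => hv; apply/(negP v0)/eqP/rowP => i; rewrite mxE.
  by apply/eqP/negbNE/negP => vi; apply: hv; exists i.
by apply: lt_le_trans (coord_le_enorm v i); rewrite normr_gt0.
Qed.

Lemma enorm_normalize_le1 v : enorm ((enorm v)^-1 *: v) <= 1.
Proof.
have [->|v0] := eqVneq v 0; first by rewrite scaler0 enorm0.
by rewrite enormZ ger0_norm ?invr_ge0 ?enorm_ge0 // mulVf // gt_eqF // enorm_gt0.
Qed.

Lemma enorm_le_coord v eta : (forall i, `|v 0 i| <= eta) -> enorm v <= m%:R * eta.
Proof.
move=> h; apply: enorm_le.
  have [->|m0] := posnP m; first by rewrite mul0r.
  by rewrite mulr_ge0 // (le_trans _ (h (Ordinal m0))).
apply: le_trans (_ : m%:R * eta ^+ 2 <= _).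
  rewrite /dotv mulr_natl -[X in _ *+ X]card_ord -sumr_const.
  apply: ler_sum => i _; rewrite -expr2 -real_normK ?num_real //.
  by rewrite lerXn2r ?nnegrE // (le_trans _ (h i)).
rewrite exprMn ler_wpM2r ?sqr_ge0 // -natrX ler_nat.
by case: m => // k; rewrite expnS leq_pmulr.
Qed.

Lemma dotv_le_coord u v eta : (forall i, `|u 0 i| <= eta) ->
  `|dotv u v| <= m%:R * eta * enorm v.
Proof.
move=> h; apply: le_trans (ler_norm_sum _ _ _) _.
rewrite -mulrA mulr_natl -[X in _ *+ X]card_ord -sumr_const.
apply: ler_sum => i _; rewrite normrM; apply: ler_pM => //.
exact: coord_le_enorm.
Qed.

Lemma enormD_orth_sqr u v : dotv u v = 0 ->
  enorm (u + v) ^+ 2 = enorm u ^+ 2 + enorm v ^+ 2.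
Proof. by move=> uv; rewrite !enorm_sqr dotvDl !dotvDr uv (dotvC v u) uv; lra. Qed.

Lemma enormD_orth_le u v : dotv u v = 0 -> enorm (u + v) <= enorm u + enorm v.
Proof.
move=> uv; rewrite -ler_sqr ?nnegrE ?addr_ge0 ?enorm_ge0 // enormD_orth_sqr //.
by have := enorm_ge0 u; have := enorm_ge0 v; nra.
Qed.

End Euclidean.

Lemma natr_mul_div_lt {R : numFieldType} (m : nat) (x : R) : 0 < x ->
  m%:R * (x / m.+1%:R) < x.
Proof. by move=> x0; rewrite mulrA ltr_pdivrMr // mulrC ltr_pM2l // ltr_nat. Qed.

Section UnitCube.
Local Open Scope classical_set_scope.

Lemma cluster_in_unit_cube (R : realType) (m : nat) (P : R -> set 'rV[R]_m) :
  (forall d, 0 < d -> P d !=set0) ->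
  (forall d d', d <= d' -> P d `<=` P d') ->
  (forall d, P d `<=` [set v | forall i, `|v 0 i| <= 1]) ->
  exists w : 'rV[R]_m, forall d eta, 0 < d -> 0 < eta ->
    exists2 u, P d u & forall i, `|w 0 i - u 0 i| < eta.
Proof.
move=> Pne Pmono Pcube.
pose K := [set v : 'rV[R]_m | forall i, (fun=> `[(-1)%R, 1%R]) i (v ord0 i)].
have cK : compact K by apply: rV_compact => _; exact: segment_compact.
pose F := filter_from [set d : R | 0 < d] P.
have FF : Filter F.
  apply: filter_from_filter; first by exists 1; rewrite /= ltr01.
  move=> d d' d0 d'0; exists (Num.min d d'); first by rewrite /= lt_min d0 d'0.
  by move=> v Pv; split; apply: Pmono Pv; rewrite ge_min lexx ?orbT.
have PF : ProperFilter F := filter_from_proper FF Pne.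
have FK : F K by exists 1 => //= v /Pcube h i /=; rewrite in_itv /= -ler_norml h.
have [w [_ cw]] := cK F PF FK.
exists w => d eta d0 eta0.
have [|u [Pu [_ wu]]] := cw (P d) (ball w eta) _ (@nbhsx_ballx _ _ w eta eta0).
  by exists d.
by exists u => // i; exact: wu.
Qed.

End UnitCube.

Definition graph {R : realType} {m : nat} (T : {vspace 'rV[R]_m})
  (f : 'rV[R]_m -> 'rV[R]_m) (y : 'rV[R]_m) : Prop :=
  exists2 x, x \in T & y = x + f x.

Section Graph.
Context {R : realType} {m : nat}.
Variable T : {vspace 'rV[R]_m}.
Variables (f : 'rV[R]_m -> 'rV[R]_m) (alpha : 'rV[R]_m).
Hypotheses (halpha : alpha \in T) (hf : forall x, x \in T -> perp T (f x)).

Local Notation chord x := (x + f x - (alpha + f alpha)).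

Definition secant (x : 'rV[R]_m) : 'rV[R]_m := (enorm (chord x))^-1 *: chord x.

Lemma chordE x : chord x = (x - alpha) + (f x - f alpha).
Proof. by rewrite opprD addrACA. Qed.

Lemma dotv_incr_orth x t : x \in T -> t \in T -> dotv t (f x - f alpha) = 0.
Proof. by move=> xT tT; rewrite dotvBr (hf x xT t tT) (hf alpha halpha t tT) subrr. Qed.

Lemma enorm_chord_sqr x : x \in T ->
  enorm (chord x) ^+ 2 = enorm (x - alpha) ^+ 2 + enorm (f x - f alpha) ^+ 2.
Proof.
by move=> xT; rewrite chordE enormD_orth_sqr // dotv_incr_orth // memvB.
Qed.

Lemma enorm_chord_le x : x \in T ->
  enorm (chord x) <= enorm (x - alpha) + enorm (f x - f alpha).
Proof.
by move=> xT; rewrite chordE enormD_orth_le // dotv_incr_orth // memvB.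
Qed.

Lemma enorm_incr_le_chord x : x \in T -> enorm (f x - f alpha) <= enorm (chord x).
Proof.
move=> xT; rewrite -ler_sqr ?nnegrE ?enorm_ge0 // enorm_chord_sqr //.
by rewrite lerDr sqr_ge0.
Qed.

(* The component of [secant x] orthogonal to T has length |f x - f alpha| / |chord x|,
   and w in T has no such component. *)
Lemma secant_near_T x w eta : x \in T -> w \in T -> 0 < eta ->
  (forall i, `|w 0 i - secant x 0 i| <= eta) ->
  enorm (f x - f alpha)
    <= m%:R * eta * (enorm (x - alpha) + enorm (f x - f alpha)).
Proof.
move=> xT wT eta0 hw.
have [->|E0] := eqVneq (f x - f alpha) 0.
  by rewrite enorm0 mulr_ge0 ?addr_ge0 ?enorm_ge0 // mulr_ge0 // ltW.
have {}E0 := enorm_gt0 _ E0.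
have N0 := lt_le_trans E0 (enorm_incr_le_chord _ xT).
have hdot : dotv (w - secant x) (f x - f alpha)
    = - ((enorm (chord x))^-1 * enorm (f x - f alpha) ^+ 2).
  rewrite dotvBl dotv_incr_orth // sub0r dotvZl chordE dotvDl.
  by rewrite dotv_incr_orth ?memvB // add0r enorm_sqr.
have hw' i : `|(w - secant x) 0 i| <= eta by rewrite coordB.
have := dotv_le_coord _ (f x - f alpha) _ hw'.
rewrite hdot normrN ger0_norm ?mulr_ge0 ?invr_ge0 ?enorm_ge0 //.
rewrite expr2 mulrA (mulrC _^-1) ler_pM2r // ler_pdivrMr // => /le_trans; apply.
by rewrite ler_wpM2l ?mulr_ge0 ?(ltW eta0) // enorm_chord_le.
Qed.

Lemma Tan_graph_of_secants (hcont : cont_at_in T f alpha) (w : 'rV[R]_m) :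
  (forall d eta, 0 < d -> 0 < eta -> exists x, [/\ x \in T, enorm (x - alpha) < d,
      0 < enorm (chord x) & forall i, `|w 0 i - secant x 0 i| <= eta]) ->
  Tan (graph T f) (alpha + f alpha) w.
Proof.
move=> hw eps eps0.
have eps20 : 0 < eps / 2 by rewrite divr_gt0.
have [d [d0 hd]] := hcont _ eps20.
have [||x [xT xd N0 hx]] := hw (Num.min d (eps / 2)) (eps / m.+1%:R).
- by rewrite lt_min d0 eps20.
- by rewrite divr_gt0.
move: xd; rewrite lt_min => /andP[xd xeps].
exists (x + f x), (enorm (chord x))^-1; split; last split; last split.
- by exists x.
- by rewrite invr_gt0.
- apply: le_lt_trans (enorm_chord_le _ xT) _.
  by rewrite [eps]splitr ltrD // hd.
- have hsec : enorm (secant x - w) <= m%:R * (eps / m.+1%:R).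
    by apply: enorm_le_coord => i; rewrite coordB distrC.
  exact: le_lt_trans hsec (natr_mul_div_lt m _ eps0).
Qed.

Lemma diff_at0_of_Tan_graph_sub (hcont : cont_at_in T f alpha)
    (hTan : forall v, Tan (graph T f) (alpha + f alpha) v -> v \in T) :
  diff_at_in T f alpha (fun _ => 0).
Proof.
move=> c c0; apply: contrapT => nodelta.
pose bad d x := [/\ x \in T, enorm (x - alpha) < d &
  c * enorm (x - alpha) < enorm (f x - f alpha)].
have bad_ex d : 0 < d -> exists x, bad d x.
  move=> d0; apply: contrapT => nobad; apply: nodelta; exists d; split => // x xT xd.
  by rewrite subr0 leNgt; apply/negP => lt; apply: nobad; exists x.
pose P d := [set secant x | x in bad d]%classic.
have [|||w hw] := @cluster_in_unit_cube R m P.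
- by move=> d /bad_ex[x bx]; exists (secant x), x.
- move=> d d' dd' _ [x [xT xd xc] <-]; exists x => //.
  by split => //; exact: lt_le_trans dd'.
- move=> d _ [x _ <-] i; apply: le_trans (coord_le_enorm _ i) _.
  exact: enorm_normalize_le1.
have wT : w \in T.
  apply/hTan/Tan_graph_of_secants => // d eta d0 eta0.
  have [_ [x [xT xd xc] <-] hx] := hw d eta d0 eta0.
  exists x; split => // [|i]; last exact/ltW/hx.
  apply: lt_le_trans (enorm_incr_le_chord _ xT).
  by apply: le_lt_trans xc; rewrite mulr_ge0 ?enorm_ge0 ?ltW.
have c10 : 0 < c + 1 by lra.
have q0 : 0 < c / (c + 1) / m.+1%:R by rewrite !divr_gt0.
have [_ [x [xT _ xc] <-] hx] := hw 1 _ ltr01 q0.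
have mq : m%:R * (c / (c + 1) / m.+1%:R) <= c / (c + 1).
  exact/ltW/natr_mul_div_lt/divr_gt0.
have hE := secant_near_T _ _ _ xT wT q0 (fun i => ltW (hx i)).
have {}hE := le_trans hE (ler_wpM2r (addr_ge0 (enorm_ge0 _) (enorm_ge0 _)) mq).
move: hE; rewrite mulrAC ler_pdivlMr //.
have := enorm_ge0 (x - alpha); lra.
Qed.

Lemma Tan_graph_of_diff_at0 (hdiff : diff_at_in T f alpha (fun _ => 0)) v :
  v \in T -> Tan (graph T f) (alpha + f alpha) v.
Proof.
move=> vT eps eps0.
have [->|v0] := eqVneq v 0.
  exists (alpha + f alpha), 1; rewrite subrr scaler0 subr0 enorm0.
  by split; [exists alpha | rewrite ltr01].
set V := enorm v; have V0 : 0 < V := enorm_gt0 _ v0.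
have eps20 : 0 < eps / 2 by rewrite divr_gt0.
set c := Num.min 1 (eps / 2 / V).
have c0 : 0 < c by rewrite lt_min ltr01 !divr_gt0.
have [d [d0 hd]] := hdiff c c0.
have M0 : 0 < Num.min d (eps / 2) by rewrite lt_min d0 eps20.
set s := Num.min d (eps / 2) / 2.
have s0 : 0 < s by rewrite divr_gt0.
have : s < Num.min d (eps / 2) by rewrite /s; lra.
rewrite lt_min => /andP[sd seps].
pose x := alpha + (s / V) *: v.
have xT : x \in T by rewrite memvD // memvZ.
have dx : x - alpha = (s / V) *: v by rewrite /x addrC addKr.
have Dx : enorm (x - alpha) = s.
  by rewrite dx enormZ ger0_norm ?divr_ge0 ?ltW // divfK // gt_eqF.
have Ex : enorm (f x - f alpha) <= c * s.
  by have := hd x xT; rewrite Dx subr0; apply.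
exists (x + f x), (V / s); split; last split; last split.
- by exists x.
- by rewrite divr_gt0.
- apply: le_lt_trans (enorm_chord_le _ xT) _; rewrite Dx.
  have cs : c * s <= s by rewrite ger_pMl // ge_min lexx.
  by have := le_trans Ex cs; lra.
- have rdx : (V / s) *: (x - alpha) = v.
    by rewrite dx scalerA [_ * _](_ : _ = 1) ?scale1r //; field; rewrite !gt_eqF.
  rewrite chordE scalerDr rdx addrAC subrr add0r enormZ ger0_norm ?divr_ge0 ?ltW //.
  apply: le_lt_trans (ler_wpM2l _ Ex) _; first by rewrite divr_ge0 ?ltW.
  have : c <= eps / 2 / V by rewrite ge_min lexx orbT.
  rewrite ler_pdivlMr // => cV.
  have -> : V / s * (c * s) = c * V by field; rewrite gt_eqF.
  lra.
Qed.

End Graph.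

Theorem lemma2p43 (R : realType) (n : nat) (T : {vspace 'rV[R]_n.+1})
  (hT : \dim T = n)
  (alpha : 'rV[R]_n.+1) (halpha : alpha \in T)
  (f : 'rV[R]_n.+1 -> 'rV[R]_n.+1)
  (hf : forall x, x \in T -> perp T (f x))
  (hcont : cont_at_in T f alpha)
  (hTan : forall v, Tan (fun y => exists2 x, x \in T & y = x + f x)
                        (alpha + f alpha) v -> v \in T) :
  diff_at_in T f alpha (fun _ => 0) /\
  (forall v, Tan (fun y => exists2 x, x \in T & y = x + f x)
                 (alpha + f alpha) v <-> v \in T).
Proof.
have hdiff := diff_at0_of_Tan_graph_sub _ _ _ halpha hf hcont hTan.
split=> // v; split; first exact: hTan.
exact: Tan_graph_of_diff_at0.
Qed.
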